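(* Let $X$ be a $T_0$ space. If $GSI_2$-convergence in $X$ is topological, then $X$ is $QI_2$-continuous.
   Context: For a $T_0$ space $X$, the specialization order is $x\le y$ iff $x\in \mathrm{cl}\{y\}$; $\uparrow A=\{x: a\le x\text{ for some } a\in A\}$, $\uparrow x=\uparrow\{x\}$; $A^\uparrow$, $A^\downarrow$ are the sets of upper and lower bounds of $A$, and $A^\delta=(A^\uparrow)^\downarrow$. A nonempty subset $A$ of a space is irreducible if whenever $A\subseteq F_1\cup F_2$ with $F_1,F_2$ closed, $A\subseteq F_1$ or $A\subseteq F_2$. $X^{(<\omega)}$ is the set of nonempty finite subsets of $X$. $P_S(X)$ is the set of nonempty compact saturated (upper) subsets of $X$ with the upper Vietoris topology, basis $\{\square U: U\text{ open}\}$, $\square U=\{Q: Q\subseteq U\}$. A net is eventually in $U$ if from some index on all its terms lie in $U$; it converges to $x$ in a topology if it is eventually in every open set containing $x$. A net $(x_i)_{i\in I}$ $GSI_2$-converges to $x$ if there exists $\mathcal F\subseteq X^{(<\omega)}$ with $\{\uparrow G: G\in\mathcal F\}$ irreducible in $P_S(X)$ such that (i) for every open $U$, if $\uparrow G\subseteq U$ for some $G\in\mathcal F$ then $x_i\in U$ eventually, and (ii) $\bigcap_{G\in\mathcal F}\uparrow G\subseteq\uparrow x$. Let $\mathcal{O}(\mathcal{GSI}_2(X))$ be the topology of all $U\subseteq X$ such that every net $GSI_2$-converging to a point of $U$ is eventually in $U$. $GSI_2$-convergence in $X$ is topological if for every net and point, the net $GSI_2$-converges to the point iff it converges to it in the topology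 $\mathcal{O}(\mathcal{GSI}_2(X))$. For $A\subseteq X$, $x\in X$, $A\ll_{I_2}x$ means: for every irreducible $D\subseteq X$ with $x\in D^\delta$, $A\cap\mathrm{cl}D\ne\emptyset$. For $x\in X$, $w(x)=\{\uparrow F: F\in X^{(<\omega)}, F\ll_{I_2}x\}$. $X$ is $QI_2$-continuous if for every $x\in X$, $w(x)$ is an irreducible subset of $P_S(X)$ and $\uparrow x=\bigcap w(x)$. *)

From mathcomp Require Import all_boot all_classical.
From mathcomp Require Import topology_structure compact separation_axioms.
Set Implicit Arguments. Unset Strict Implicit. Unset Printing Implicit Defensive.
Local Open Scope classical_set_scope.

Section GSI2.
Variable X : topologicalType.

Definition spec (x y : X) : Prop := closure [set y] x.

Definition upset (A : set X) : set X := [set y | exists2 a, A a & spec a y].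
Definition upx (x : X) : set X := upset [set x].

Definition ubounds (A : set X) : set X := [set y | forall a, A a -> spec a y].
Definition lbounds (A : set X) : set X := [set y | forall a, A a -> spec y a].
Definition delta (A : set X) : set X := lbounds (ubounds A).

Definition irreducible (A : set X) : Prop :=
  A !=set0 /\
  forall F1 F2 : set X, closed F1 -> closed F2 -> A `<=` F1 `|` F2 ->
    A `<=` F1 \/ A `<=` F2.

Definition fin_ne (G : set X) : Prop := finite_set G /\ G !=set0.

Definition PS : set (set X) :=
  [set Q | Q !=set0 /\ compact Q /\ upset Q = Q].

Definition box (U : set X) : set (set X) := [set Q | PS Q /\ Q `<=` U].

(* open sets of the upper Vietoris topology on P_S(X): unions of basic sets *)
Definition PS_open (V : set (set X)) : Prop :=
  V `<=` PS /\ forall Q, V Q -> exists2 U, open U & (Q `<=` U /\ box U `<=` V).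

Definition PS_closed (C : set (set X)) : Prop :=
  C `<=` PS /\ PS_open (PS `\` C).

Definition PS_irreducible (A : set (set X)) : Prop :=
  A `<=` PS /\ A !=set0 /\
  forall C1 C2, PS_closed C1 -> PS_closed C2 -> A `<=` C1 `|` C2 ->
    A `<=` C1 \/ A `<=` C2.

Definition directed (I : Type) (le : I -> I -> Prop) : Prop :=
  (exists i : I, True) /\ (forall i, le i i) /\
  (forall i j k, le i j -> le j k -> le i k) /\
  (forall i j, exists k, le i k /\ le j k).

Definition eventually (I : Type) (le : I -> I -> Prop) (s : I -> X) (U : set X) :=
  exists i0, forall i, le i0 i -> U (s i).

Definition GSI2_conv (I : Type) (le : I -> I -> Prop) (s : I -> X) (x : X) : Prop :=
  exists F : set (set X),
    (forall G, F G -> fin_ne G) /\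
    PS_irreducible [set upset G | G in F] /\
    (forall U : set X, open U -> (exists2 G, F G & upset G `<=` U) ->
        eventually le s U) /\
    \bigcap_(G in F) upset G `<=` upx x.

Definition O_GSI2 : set (set X) :=
  [set U | forall (I : Type) (le : I -> I -> Prop) (s : I -> X) (x : X),
     directed le -> GSI2_conv le s x -> U x -> eventually le s U].

Definition O_GSI2_conv (I : Type) (le : I -> I -> Prop) (s : I -> X) (x : X) : Prop :=
  forall U, O_GSI2 U -> U x -> eventually le s U.

Definition GSI2_topological : Prop :=
  forall (I : Type) (le : I -> I -> Prop) (s : I -> X) (x : X),
    directed le -> (GSI2_conv le s x <-> O_GSI2_conv le s x).

Definition way_below_I2 (A : set X) (x : X) : Prop :=
  forall D : set X, irreducible D -> delta D x -> A `&` closure D !=set0.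

Definition w (x : X) : set (set X) :=
  [set upset F | F in [set F | fin_ne F /\ way_below_I2 F x]].

Definition QI2_continuous : Prop :=
  forall x : X, PS_irreducible (w x) /\ upx x = \bigcap_(Q in w x) Q.

End GSI2.

(* The net of the O(GSI_2)-open neighbourhoods of x converges to x in
   O(GSI_2), hence GSI_2-converges to x, witnessed by some family F.  Each G in F
   is way below x: an irreducible D with x in D^δ, viewed as the net of its points
   indexed by the open sets meeting it, GSI_2-converges to x, so every
   O(GSI_2)-neighbourhood of x meets D, and then condition (i) forces G to meet
   cl D.  Conversely, if F' ≪ x and U ⊇ F' is open, then ↑G ⊆ U for some G in F:
   otherwise Rudin's lemma gives a closed irreducible D outside U meeting every
   ↑G, and condition (ii) puts x in D^δ.  Thus w(x) lies between the irreducible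
   set {↑G | G ∈ F} and its closure in P_S(X), so it is irreducible, and
   ⋂ w(x) ⊆ ⋂_{G ∈ F} ↑G ⊆ ↑x. *)

From mathcomp Require Import all_boot all_classical.
From mathcomp Require Import topology_structure compact separation_axioms.
Set Implicit Arguments. Unset Strict Implicit. Unset Printing Implicit Defensive.
Local Open Scope classical_set_scope.

Section GSI2Theory.
Variable X : topologicalType.
Implicit Types (A D K U V W : set X) (Qs : set (set X)) (x y : X).

Lemma specP x y : spec x y <-> (forall U, open U -> U x -> U y).
Proof.
split.
- move=> xy U oU Ux.
  have : nbhs x U by apply: open_nbhs_nbhs.
  by move=> /xy [z [-> ]].
- move=> h B; rewrite nbhsE => -[U [oU Ux] UB].
  by exists y; split => //; apply: UB; apply: h.
Qed.

Lemma spec_refl x : spec x x.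
Proof. exact/specP. Qed.

Lemma spec_trans x y z : spec x y -> spec y z -> spec x z.
Proof. by move=> /specP xy /specP yz; apply/specP => U oU /xy /yz; apply. Qed.

Lemma sub_upset A : A `<=` upset A.
Proof. by move=> a Aa; exists a => //; apply: spec_refl. Qed.

Lemma upset_idem A : upset (upset A) = upset A.
Proof.
apply/seteqP; split; last exact: sub_upset.
by move=> z [y [a Aa ay] yz]; exists a => //; apply: spec_trans ay yz.
Qed.

Lemma upset_sub_open A U : open U -> A `<=` U -> upset A `<=` U.
Proof. by move=> oU AU y [a /AU Ua /specP ay]; apply: ay. Qed.

Lemma upsetU A B : upset (A `|` B) = upset A `|` upset B.
Proof.
apply/seteqP; split; first by move=> y [a [Aa|Ba] ay]; [left|right]; exists a.
by move=> y [[a Aa ay]|[a Ba ay]]; exists a => //; [left|right].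
Qed.

Lemma compact_upx x : compact (upx x).
Proof.
move=> F PF Fx; exists x; split; first exact: sub_upset.
move=> B U FB; rewrite nbhsE => -[V [oV Vx] VU].
have [y [By [_ -> /specP xy]]] := filter_ex (filterI FB Fx).
by exists y; split => //; exact: VU (xy V oV Vx).
Qed.

Lemma compact_upset_finite A : finite_set A -> compact (upset A).
Proof.
case/finite_setP=> n; elim: n A => [A|n ih A /eq_cardSP[x Ax /ih ?]].
  rewrite II0 card_eq0 => /eqP ->.
  by rewrite (_ : upset set0 = set0); [exact: compact0 | apply/seteqP; split => // y []].
by rewrite -(setD1K Ax) upsetU; apply: compactU => //; exact: compact_upx.
Qed.

Lemma sub_delta A : A `<=` delta A.
Proof. by move=> a Aa y; apply. Qed.

Lemma fin_ne1 x : fin_ne [set x].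
Proof. by split; [exact: finite_set1 | exists x]. Qed.

Lemma PS_upset A : fin_ne A -> PS (upset A).
Proof.
move=> [fA [a Aa]]; split; first by exists a; apply: sub_upset.
by split; [exact: compact_upset_finite | exact: upset_idem].
Qed.

Lemma PS_upclosed Q x y : PS Q -> Q x -> spec x y -> Q y.
Proof. by move=> [_ [_ QE]] Qx xy; rewrite -QE; exists x. Qed.

Lemma irreducible1 x : irreducible [set x].
Proof.
split; first by exists x.
by move=> F1 F2 _ _ /(_ x erefl) [F1x|F2x]; [left|right] => _ ->.
Qed.

Lemma irreducible_meets_openI D U V : irreducible D -> open U -> open V ->
  U `&` D !=set0 -> V `&` D !=set0 -> U `&` V `&` D !=set0.
Proof.
move=> [_ irrD] oU oV [a [Ua Da]] [b [Vb Db]]; apply: contrapT => UVD.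
have DUV : D `<=` ~` U `|` ~` V.
  move=> d Dd; have [Ud|] := pselect (U d); last by left.
  by right => Vd; apply: UVD; exists d.
have [DU|DV] := irrD _ _ (open_closedC oU) (open_closedC oV) DUV.
- exact: DU a Da Ua.
- exact: DV b Db Vb.
Qed.

Lemma PS_closed_meets K : closed K -> PS_closed [set Q | PS Q /\ Q `&` K !=set0].
Proof.
move=> cK; split; first by move=> Q [].
split; first by move=> Q [].
move=> Q [PSQ QK]; exists (~` K); first exact: closed_openC.
split; first by move=> y Qy Ky; apply: QK; split => //; exists y.
by move=> Q' [PSQ' Q'K]; split => // -[_ [y [/Q'K]]].
Qed.

Lemma closed_PS_closed_upx (C : set (set X)) :
  PS_closed C -> closed [set d | C (upx d)].
Proof.
move=> [CPS [_ openC']]; rewrite -openC openE => d Cd.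
have [U oU [dU boxU]] := openC' _ (conj (PS_upset (fin_ne1 d)) Cd).
apply: (@filterS _ _ _ U); last by apply: open_nbhs_nbhs; split => //; apply/dU/sub_upset.
move=> e Ue Ce.
have eU : upx e `<=` U by apply: upset_sub_open => // _ ->.
by have [_] := boxU _ (conj (CPS _ Ce) eU); apply.
Qed.

Lemma PS_irreducible_upx D : irreducible D -> PS_irreducible [set upx d | d in D].
Proof.
move=> [[d0 Dd0] irrD]; split; first by move=> _ [d _ <-]; exact: PS_upset (fin_ne1 d).
split; first by exists (upx d0), d0.
move=> C1 C2 cC1 cC2 sub.
have : D `<=` [set d | C1 (upx d)] `|` [set d | C2 (upx d)].
  by move=> d Dd; apply: sub; exists d.
case/(irrD _ _ (closed_PS_closed_upx cC1) (closed_PS_closed_upx cC2)) => DC;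
  [left|right]; move=> _ [d /DC Cd <-]; exact: Cd.
Qed.

Lemma PS_irreducible_dense (Qs Rs : set (set X)) : PS_irreducible Qs ->
  Qs `<=` Rs -> Rs `<=` @PS X ->
  (forall R U, Rs R -> open U -> R `<=` U -> exists2 Q, Qs Q & Q `<=` U) ->
  PS_irreducible Rs.
Proof.
move=> [_ [[Q0 QsQ0] irrQs]] QsRs RsPS dense.
have closed_sub C : PS_closed C -> Qs `<=` C -> Rs `<=` C.
  move=> [CPS [_ openC']] QsC R RsR; apply: contrapT => CR.
  have [U oU [RU boxU]] := openC' R (conj (RsPS R RsR) CR).
  have [Q QsQ QU] := dense R U RsR oU RU.
  by have [_] := boxU Q (conj (RsPS Q (QsRs Q QsQ)) QU); apply; apply: QsC.
split => //; split; first by exists Q0; apply: QsRs.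
move=> C1 C2 cC1 cC2 sub.
by case: (irrQs C1 C2 cC1 cC2 (subset_trans QsRs sub)) => QsC;
  [left|right]; apply: closed_sub.
Qed.

Lemma compact_chain_cover K (Phi : set (set X)) : compact K -> Phi !=set0 ->
  (forall U, Phi U -> open U) -> total_on Phi subset ->
  K `<=` \bigcup_(U in Phi) U -> exists2 U, Phi U & K `<=` U.
Proof.
move=> cK [U0 PhiU0] oPhi chain KPhi; apply: contrapT => noU.
pose B U := K `&` ~` U.
have BF : ProperFilter (filter_from Phi B).
  apply: filter_from_proper; last first.
    by move=> U PhiU; apply: nonsubset => KU; apply: noU; exists U.
  apply: filter_from_filter; first by exists U0.
  move=> U V PhiU PhiV; have [UV|VU] := chain U V PhiU PhiV.
  - by exists V => // y [Ky nVy]; split; split => // /UV.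
  - by exists U => // y [Ky nUy]; split; split => // /VU.
have [p [Kp clp]] := cK _ BF (ex_intro2 _ _ U0 PhiU0 (fun y => @proj1 _ _)).
have [U PhiU Up] := KPhi p Kp.
have [|y [[_ nUy] Uy]] := clp (B U) U (ex_intro2 _ _ U PhiU (fun y h => h)) _.
  by apply: open_nbhs_nbhs; split => //; apply: oPhi.
exact: nUy.
Qed.

Definition avoids Qs W := forall Q, Qs Q -> ~ Q `<=` W.

Lemma maximal_open_avoiding Qs U : (forall Q, Qs Q -> compact Q) ->
  open U -> avoids Qs U ->
  exists W, [/\ open W, U `<=` W, avoids Qs W &
    forall W', open W' -> W `<=` W' -> avoids Qs W' -> W' `<=` W].
Proof.
move=> cQs oU QsU.
pose P := [set V | open V /\ avoids Qs (V `|` U)].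
have [V0 [[oV0 QsV0] maxV0]] : exists V0, P V0 /\ forall V, V0 `<` V -> ~ P V.
  apply: Zorn_bigcup => Phi PhiP chain; split.
    by apply: bigcup_open => V /PhiP [].
  move=> Q QsQ QPhiU.
  have [[V1 PhiV1]|noPhi] := pselect (Phi !=set0); last first.
    by apply: (QsU Q QsQ) => y /QPhiU [[V PhiV _]|//]; case: noPhi; exists V.
  have [_ [V PhiV <-] QVU] : exists2 W, [set V `|` U | V in Phi] W & Q `<=` W.
    apply: compact_chain_cover (cQs Q QsQ) _ _ _ _.
    - by exists (V1 `|` U), V1.
    - by move=> _ [V /PhiP [oV _] <-]; apply: openU.
    - move=> _ _ [V PhiV <-] [V' PhiV' <-].
      by case: (chain V V' PhiV PhiV') => VV'; [left|right]; apply: setSU.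
    - move=> y /QPhiU [[V PhiV Vy]|Uy]; first by exists (V `|` U); [exists V|left].
      by exists (V1 `|` U); [exists V1|right].
  by have [_ /(_ Q QsQ)] := PhiP V PhiV.
exists (V0 `|` U); split => //; first exact: openU.
move=> W oW V0UW QsW y Wy; left; apply: contrapT => nV0y.
have WU : W `|` U = W by apply/setUidPl => z Uz; apply/V0UW; right.
apply: (maxV0 W); last by split => //; rewrite WU.
split; first by move=> z V0z; apply/V0UW; left.
by move=> WV0; apply/nV0y/WV0.
Qed.

Lemma rudin_irreducible Qs U : PS_irreducible Qs -> open U -> avoids Qs U ->
  exists D, [/\ closed D, irreducible D, D `<=` ~` U &
    forall Q, Qs Q -> Q `&` D !=set0].
Proof.
move=> [QsPS [[Q0 QsQ0] irrQs]] oU QsU.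
have cQs Q : Qs Q -> compact Q by move=> /QsPS [_ []].
have [W [oW UW QsW maxW]] := maximal_open_avoiding cQs oU QsU.
have cD : closed (~` W) by exact: open_closedC.
have QD Q : Qs Q -> Q `&` ~` W !=set0 by move=> /QsW /nonsubset.
have D_sub F : closed F -> Qs `<=` [set Q | PS Q /\ Q `&` (~` W `&` F) !=set0] ->
    ~` W `<=` F.
  move=> cF QsF.
  have : W `|` ~` F `<=` W.
    apply: (maxW _ (openU oW (closed_openC cF))); first by move=> y Wy; left.
    by move=> Q /QsF [_ [y [Qy [nWy Fy]]]] /(_ y Qy) [].
  by move=> WF y nWy; apply: contrapT => nFy; apply/nWy/WF; right.
exists (~` W); split => //; last by move=> y nWy /UW.
split; first by have [y [_ nWy]] := QD Q0 QsQ0; exists y.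
move=> F1 F2 cF1 cF2 DF.
case: (irrQs _ _ (PS_closed_meets (closedI cD cF1))
    (PS_closed_meets (closedI cD cF2))) => [Q QsQ | QsF | QsF].
- have [PSQ [y [Qy nWy]]] := (QsPS Q QsQ, QD Q QsQ).
  by case: (DF y nWy) => Fy; [left|right]; split => //; exists y.
- by left; apply: D_sub.
- by right; apply: D_sub.
Qed.

Lemma exists_sub_open_of_way_below Qs x A U : PS_irreducible Qs ->
  \bigcap_(Q in Qs) Q `<=` upx x -> way_below_I2 A x -> open U -> A `<=` U ->
  exists2 Q, Qs Q & Q `<=` U.
Proof.
move=> irrQs Qsx Ax oU AU; apply: contrapT => noQ.
have [D [cD irrD DU QD]] :=
  rudin_irreducible irrQs oU (fun Q QsQ QU => noQ (ex_intro2 _ _ Q QsQ QU)).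
have Dx : delta D x.
  move=> y Dy; have [_ -> //] : upx x y.
  apply: Qsx => Q QsQ; have [d [Qd Dd]] := QD Q QsQ.
  by apply: PS_upclosed (Dy d Dd) => //; case: irrQs => /(_ Q QsQ).
have [a [Aa]] := Ax D irrD Dx; rewrite -(closure_id D).1 // => Da.
exact: DU a Da (AU a Aa).
Qed.

Lemma upx_sub_upset_way_below A x : way_below_I2 A x -> upx x `<=` upset A.
Proof.
move=> Ax y [_ -> xy].
have [a [Aa ax]] := Ax _ (irreducible1 x) (sub_delta (erefl x)).
by exists a => //; apply: spec_trans ax xy.
Qed.

Record pointed (N : set (set X)) D := Pointed {
  pset : set X; ppoint : X;
  pset_in : N pset; ppoint_in_pset : pset ppoint; ppoint_in : D ppoint }.

Definition pointed_le N D (i j : pointed N D) := pset j `<=` pset i.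

Definition pointed_net N D (i : pointed N D) := ppoint i.

Lemma pointed_eventuallyP N D W :
  eventually (@pointed_le N D) (@pointed_net N D) W <->
  exists2 A, N A & A `&` D !=set0 /\ A `&` D `<=` W.
Proof.
split.
- move=> [[A a NA Aa Da] ev]; exists A => //; split; first by exists a.
  by move=> d [Ad Dd]; apply: (ev (Pointed NA Ad Dd)).
- move=> [A NA [[a [Aa Da]] ADW]]; exists (Pointed NA Aa Da) => -[B b NB Bb Db] BA.
  exact: ADW (conj (BA b Bb) Db).
Qed.

Lemma pointed_directed N D : (exists2 A, N A & A `&` D !=set0) ->
  (forall A B, N A -> N B -> A `&` D !=set0 -> B `&` D !=set0 ->
    N (A `&` B) /\ A `&` B `&` D !=set0) ->
  directed (@pointed_le N D).
Proof.
move=> [A NA [a [Aa Da]]] NI; split; first by exists (Pointed NA Aa Da).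
split; first by move=> i.
split; first by move=> i j k ij jk y /jk /ij.
move=> [A1 a1 NA1 A1a1 Da1] [A2 a2 NA2 A2a2 Da2].
have [NA12 [b [A12b Db]]] := NI A1 A2 NA1 NA2 (ex_intro _ a1 (conj A1a1 Da1))
  (ex_intro _ a2 (conj A2a2 Da2)).
by exists (Pointed NA12 A12b Db); split => y [].
Qed.

Lemma irreducible_GSI2_conv D x : irreducible D -> delta D x ->
  GSI2_conv (@pointed_le open D) (@pointed_net open D) x.
Proof.
move=> irrD Dx; exists [set [set d] | d in D]; split.
  by move=> _ [d _ <-]; exact: fin_ne1.
split; first by rewrite image_comp; exact: PS_irreducible_upx.
split.
  move=> U oU [_ [d Dd <-] dU]; apply/pointed_eventuallyP; exists U => //.
  by split; [exists d; split => //; apply/dU/sub_upset | move=> y []].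
move=> y Dy; exists x => //; apply: Dx => d Dd.
by have [_ -> dy] := Dy [set d] (ex_intro2 _ _ d Dd erefl).
Qed.

Lemma O_GSI2_meets D x V : irreducible D -> delta D x ->
  O_GSI2 V -> V x -> V `&` D !=set0.
Proof.
move=> irrD Dx OV Vx.
have dir : directed (@pointed_le open D).
  apply: pointed_directed.
    by case: irrD.1 => d Dd; exists setT; [exact: openT | exists d].
  move=> A B oA oB AD BD; split; first exact: openI.
  exact: irreducible_meets_openI.
have /pointed_eventuallyP [A _ [[y [Ay Dy]] ADV]] :=
  OV _ _ _ x dir (irreducible_GSI2_conv irrD Dx) Vx.
by exists y; split => //; apply: ADV.
Qed.

Lemma O_GSI2T : O_GSI2 [set: X].
Proof. by move=> I le s x [[i _] _] _ _; exists i. Qed.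

Lemma O_GSI2I U V : O_GSI2 U -> O_GSI2 V -> O_GSI2 (U `&` V).
Proof.
move=> OU OV I le s x dir conv [Ux Vx].
have [[i Ui] [j Vj]] := (OU _ le s x dir conv Ux, OV _ le s x dir conv Vx).
have [_ [_ [le_trans up]]] := dir; have [k [ik jk]] := up i j.
by exists k => l kl; split; [apply/Ui/(le_trans _ _ _ ik) | apply/Vj/(le_trans _ _ _ jk)].
Qed.

Definition O_GSI2_nbhs x := [set V | O_GSI2 V /\ V x].

Lemma O_GSI2_nbhs_directed x : directed (@pointed_le (O_GSI2_nbhs x) setT).
Proof.
apply: pointed_directed; first by exists setT; [split => //; exact: O_GSI2T | exists x].
move=> U V [OU Ux] [OV Vx] _ _.
by split; [split => //; exact: O_GSI2I | exists x].
Qed.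

Lemma O_GSI2_nbhs_conv x :
  O_GSI2_conv (@pointed_le (O_GSI2_nbhs x) setT) (@pointed_net _ _) x.
Proof.
move=> V OV Vx; apply/pointed_eventuallyP; exists V => //.
by split; [exists x | move=> y []].
Qed.

Lemma way_below_I2_of_O_GSI2_nbhs_conv x A :
  (forall U, open U -> upset A `<=` U ->
    eventually (@pointed_le (O_GSI2_nbhs x) setT) (@pointed_net _ _) U) ->
  way_below_I2 A x.
Proof.
move=> ev D irrD Dx; apply: contrapT => AD.
have oU : open (~` closure D) by exact/closed_openC/closed_closure.
have AU : upset A `<=` ~` closure D.
  by apply: upset_sub_open => // a Aa Da; apply: AD; exists a.
have /pointed_eventuallyP [V [OV Vx] [_ VU]] := ev _ oU AU.
have [d [Vd Dd]] := O_GSI2_meets irrD Dx OV Vx.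
exact: VU d (conj Vd I) (subset_closure Dd).
Qed.

End GSI2Theory.

Theorem proposition4p7 (X : topologicalType) :
  @kolmogorov_space X -> GSI2_topological X -> QI2_continuous X.
Proof.
move=> _ GSI2_top x.
have [F [finF [irrF [evF capF]]]] :=
  (GSI2_top _ _ _ x (O_GSI2_nbhs_directed x)).2 (@O_GSI2_nbhs_conv _ x).
have Fw : [set upset G | G in F] `<=` w x.
  move=> _ [G FG <-]; exists G => //; split; first exact: finF.
  by apply: way_below_I2_of_O_GSI2_nbhs_conv => U oU GU; apply: evF => //; exists G.
have capQs : \bigcap_(Q in [set upset G | G in F]) Q `<=` upx x.
  by move=> y Fy; apply: capF => G FG; apply: Fy; exists G.
split.
- apply: (PS_irreducible_dense irrF Fw).
    by move=> _ [A [finA _] <-]; exact: PS_upset.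
  move=> _ U [A [_ Ax] <-] oU AU.
  exact: exists_sub_open_of_way_below irrF capQs Ax oU (subset_trans (@sub_upset _ A) AU).
- apply/seteqP; split; last by move=> y wy; apply: capQs => Q FQ; exact: wy _ (Fw _ FQ).
  by move=> y xy _ [A [_ Ax] <-]; exact: upx_sub_upset_way_below Ax y xy.
Qed.
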